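(* Assume $f(\cdot,u_t)$ is a diffeomorphism of $\mathbb{R}^{\dim(s)}$ for every $t$. The online natural gradient in charts for the models $\mathfrak p_t$ on $\mathcal S$ in the charts $\Phi_t$, written on $s_t:=\Phi_t(\mathbf s^t)$ and the matrix $J_t$ of $\mathcal J_t$ in chart $\Phi_t$, is equivalent to $$s_{t|t-1}\leftarrow f(s_{t-1},u_t),\quad F_{t-1}\leftarrow\frac{\partial f(s_{t-1},u_t)}{\partial s_{t-1}},\quad \hat y_t\leftarrow h(s_{t|t-1},u_t),\quad J\leftarrow(F_{t-1}^{-1})^\top J_{t-1}F_{t-1}^{-1},$$ $$J_t\leftarrow(1-\gamma_t)J+\gamma_t\,\mathbb E_{y\sim p_{\mathrm{obs}}(\cdot\mid\hat y_t)}\Big[\Big(\frac{\partial\ln p_{\mathrm{obs}}(y\mid\hat y_t)}{\partial s_{t|t-1}}\Big)^{\otimes2}\Big],\qquad s_t\leftarrow s_{t|t-1}+\eta_tJ_t^{-1}\Big(\frac{\partial\ln p_{\mathrm{obs}}(y_t\mid\hat y_t)}{\partial s_{t|t-1}}\Big)^\top,$$ where derivatives with respect to $s_{t|t-1}$ are derivatives of $s\mapsto\ln p_{\mathrm{obs}}(y\mid h(s,u_t))$ at $s=s_{t|t-1}$.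
   Context: Conventions: Jacobian $\partial y/\partial x$ has $(i,j)$ entry $\partial f_i/\partial x_j$; gradients of real functions are row vectors; for a row vector $v$, $v^{\otimes2}=v^\top v$. Exponential family: $p_{\mathrm{obs}}(y\mid\hat y)$ denotes a family of densities $\frac{1}{Z(\beta)}\exp(\sum_k\beta_kT_k(y))\lambda(dy)$ (reference measure $\lambda$, linearly independent sufficient statistics $T$), parameterized by its mean parameter $\hat y=\mathbb{E}[T(y)]$. Dynamical system: states $s_t\in\mathbb{R}^{\dim(s)}$, inputs $u_t$, smooth $f$ with $s_t=f(s_{t-1},u_t)$; smooth $h$ with predictions $\hat y_t=h(s_t,u_t)$; observations $y_t\sim p_{\mathrm{obs}}(y\mid\hat y_t)$. $\mathcal S$ is the set of sequences $\mathbf{s}=(s_t)_{t\ge0}$ with $s_t=f(s_{t-1},u_t)$ for all $t\ge1$; $\Phi_t:\mathcal S\to\mathbb{R}^{\dim(s)}$, $\Phi_t(\mathbf{s})=s_t$; $\mathfrak{p}_t(y\mid\mathbf{s}):=p_{\mathrm{obs}}(y\mid h(\Phi_t(\mathbf{s}),u_t))$. Online natural gradient in charts: on a smooth manifold $\Theta$ with models $\mathfrak p_t(y\mid\vartheta)$ and charts $\Phi_t:\Theta\to\mathbb{R}^{\dim\Theta}$ (for a tensor $g$, $\mathbf{T}\Phi(g)$ is its coordinate expression in chart $\Phi$, and $\mathbf T_\vartheta\Phi^{-1}$ the inverse operation at $\vartheta$), the algorithm maintains $\vartheta_t\in\Theta$ and a $(0,2)$-tensor $\mathcal J_t$ at $\vartheta_t$,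 updated for $t\ge1$ with learning rate $\eta_t$ and decay rate $\gamma_t$ by: $\theta\leftarrow\Phi_t(\vartheta_{t-1})$, $J\leftarrow\mathbf T\Phi_t(\mathcal J_{t-1})$; $J_t\leftarrow(1-\gamma_t)J+\gamma_t\mathbf T\Phi_t\big(\mathbb E_{y\sim\mathfrak p_t(\cdot\mid\vartheta_{t-1})}[(\partial\ln\mathfrak p_t(y\mid\vartheta)/\partial\vartheta|_{\vartheta_{t-1}})^{\otimes2}]\big)$; $\theta_t\leftarrow\theta+\eta_tJ_t^{-1}\mathbf T\Phi_t(\partial\ln\mathfrak p_t(y_t\mid\vartheta)/\partial\vartheta|_{\vartheta_{t-1}})^\top$; $\vartheta_t\leftarrow\Phi_t^{-1}(\theta_t)$, $\mathcal J_t\leftarrow\mathbf T_{\vartheta_t}\Phi_t^{-1}(J_t)$. Here $\Theta=\mathcal S$ and $\vartheta_t=\mathbf s^t$. *)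

From Stdlib Require Import Reals ClassicalEpsilon.
From mathcomp Require Import ssreflect ssrfun ssrbool eqtype ssrnat seq choice fintype.
Set Implicit Arguments.
Unset Strict Implicit.
Unset Printing Implicit Defensive.
Local Open Scope R_scope.

Definition vec (n : nat) := 'I_n -> R.
Definition mat (m n : nat) := 'I_m -> 'I_n -> R.

Definition sumI (n : nat) (F : 'I_n -> R) : R := foldr Rplus 0 (map F (enum 'I_n)).

Definition vadd n (x y : vec n) : vec n := fun i => x i + y i.
Definition vsub n (x y : vec n) : vec n := fun i => x i - y i.
Definition vscale n (a : R) (x : vec n) : vec n := fun i => a * x i.
Definition dot n (x y : vec n) : R := sumI (fun i => x i * y i).
Definition vnorm n (x : vec n) : R := sumI (fun i => Rabs (x i)).

Definition mulmv m n (A : mat m n) (x : vec n) : vec m :=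
  fun i => sumI (fun j => A i j * x j).
Definition mulmm m n p (A : mat m n) (B : mat n p) : mat m p :=
  fun i k => sumI (fun j => A i j * B j k).
Definition trm m n (A : mat m n) : mat n m := fun j i => A i j.
Definition madd m n (A B : mat m n) : mat m n := fun i j => A i j + B i j.
Definition mscale m n (a : R) (A : mat m n) : mat m n := fun i j => a * A i j.
Definition idm n : mat n n := fun i j => if i == j then 1 else 0.
Definition zerom m n : mat m n := fun _ _ => 0.
Definition zerov n : vec n := fun _ => 0.

(* For a row vector v (stored as vec n), v^{(x)2} = v^T v. *)
Definition outer n (v : vec n) : mat n n := fun i j => v i * v j.

(* Matrix inverse: the two-sided inverse if it exists (junk otherwise). *)
Definition is_minv n (A B : mat n n) : Prop :=
  mulmm A B = @idm n /\ mulmm B A = @idm n.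
Definition minv n (A : mat n n) : mat n n :=
  epsilon (inhabits (@zerom n n)) (fun B => is_minv A B).

Definition has_jacobian m n (g : vec n -> vec m) (x : vec n) (D : mat m n) : Prop :=
  forall eps, 0 < eps -> exists delta, 0 < delta /\
    forall hh : vec n, vnorm hh < delta ->
      vnorm (vsub (vsub (g (vadd x hh)) (g x)) (mulmv D hh)) <= eps * vnorm hh.
Definition jacobian m n (g : vec n -> vec m) (x : vec n) : mat m n :=
  epsilon (inhabits (@zerom m n)) (fun D => has_jacobian g x D).
Definition differentiable m n (g : vec n -> vec m) : Prop :=
  forall x, exists D, has_jacobian g x D.

(* Gradient (a row vector, stored as vec n) of a real function. *)
Definition has_gradient n (g : vec n -> R) (x : vec n) (v : vec n) : Prop :=
  forall eps, 0 < eps -> exists delta, 0 < delta /\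
    forall hh : vec n, vnorm hh < delta ->
      Rabs (g (vadd x hh) - g x - dot v hh) <= eps * vnorm hh.
Definition gradient n (g : vec n -> R) (x : vec n) : vec n :=
  epsilon (inhabits (@zerov n)) (fun v => has_gradient g x v).

Definition is_diffeo n (F : vec n -> vec n) : Prop :=
  exists G : vec n -> vec n,
    (forall x, G (F x) = x) /\ (forall x, F (G x) = x) /\
    differentiable F /\ differentiable G.

(* ln p_obs(y | yhat) = sum_k beta_k T_k(y) - ln Z(beta), beta = beta(yhat)
   the natural parameter corresponding to the mean parameter yhat. *)
Definition ln_pobs (Y : Type) (K : nat) (T : Y -> vec K) (beta : vec K -> vec K)
  (lnZ : vec K -> R) (y : Y) (yhat : vec K) : R :=
  dot (beta yhat) (T y) - lnZ (beta yhat).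

Definition Emat (Y : Type) (K n : nat) (E : vec K -> (Y -> R) -> R)
  (yhat : vec K) (M : Y -> mat n n) : mat n n :=
  fun i j => E yhat (fun y => M y i j).

Section Traj.
Variables (n : nat) (U : Type) (f : vec n -> U -> vec n) (u : nat -> U).

Definition is_traj (s : nat -> vec n) : Prop := forall t, s t.+1 = f (s t) (u t.+1).
Definition traj := {s : nat -> vec n | is_traj s}.

Definition chart (t : nat) (s : traj) : vec n := proj1_sig s t.

Fixpoint fwd (s0 : vec n) (t : nat) : vec n :=
  match t with 0 => s0 | t'.+1 => f (fwd s0 t') (u t'.+1) end.
Lemma fwd_traj (s0 : vec n) : is_traj (fwd s0).
Proof. by move=> t. Qed.
Definition traj_inh : inhabited traj := inhabits (exist _ (fwd (@zerov n)) (fwd_traj (@zerov n))).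

(* Phi_t^{-1} (well defined when each f(.,u_t) is bijective) *)
Definition chart_inv (t : nat) (x : vec n) : traj :=
  epsilon traj_inh (fun s => chart t s = x).
End Traj.

Section Steps.
Variables (n K : nat) (U Y : Type) (f : vec n -> U -> vec n) (h : vec n -> U -> vec K)
  (u : nat -> U) (T : Y -> vec K) (beta : vec K -> vec K) (lnZ : vec K -> R)
  (E : vec K -> (Y -> R) -> R) (yobs : nat -> Y) (eta gamma : nat -> R).

Let lp := ln_pobs T beta lnZ.

Definition ln_model (t : nat) (y : Y) (th : traj f u) : R := lp y (h (chart t th) (u t)).

(* Online natural gradient in charts, step t >= 1.  A (0,2)-tensor at a point
   is represented by its matrix in the current chart; the coordinate
   expression of a (0,2)-tensor in chart Phi_t, given its matrix Jp in chart
   Phi_{t-1}, is P^T Jp P with P the Jacobian of Phi_{t-1} o Phi_t^{-1}. *)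
Definition ong_step (t : nat) (thp : traj f u) (Jp : mat n n) : traj f u * mat n n :=
  let theta := chart t thp in
  let P := jacobian (fun x => chart t.-1 (chart_inv f u t x)) theta in
  let J := mulmm (trm P) (mulmm Jp P) in
  let g := fun y => gradient (fun x => ln_model t y (chart_inv f u t x)) theta in
  let Jt := madd (mscale (1 - gamma t) J)
                 (mscale (gamma t) (Emat E (h (chart t thp) (u t)) (fun y => outer (g y)))) in
  let thetat := vadd theta (vscale (eta t) (mulmv (minv Jt) (g (yobs t)))) in
  (chart_inv f u t thetat, Jt).

Definition ekf_step (t : nat) (sp : vec n) (Jp : mat n n) : vec n * mat n n :=
  let spred := f sp (u t) in
  let F := jacobian (fun s => f s (u t)) sp in
  let yhat := h spred (u t) in
  let Finv := minv F in
  let J := mulmm (trm Finv) (mulmm Jp Finv) in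
  let g := fun y => gradient (fun s => lp y (h s (u t))) spred in
  let Jt := madd (mscale (1 - gamma t) J)
                 (mscale (gamma t) (Emat E yhat (fun y => outer (g y)))) in
  (vadd spred (vscale (eta t) (mulmv (minv Jt) (g (yobs t)))), Jt).

Fixpoint ong_run (th0 : traj f u) (J0 : mat n n) (t : nat) : traj f u * mat n n :=
  match t with
  | 0 => (th0, J0)
  | t'.+1 => let p := ong_run th0 J0 t' in ong_step t'.+1 p.1 p.2
  end.

Fixpoint ekf_run (s0 : vec n) (J0 : mat n n) (t : nat) : vec n * mat n n :=
  match t with
  | 0 => (s0, J0)
  | t'.+1 => let p := ekf_run s0 J0 t' in ekf_step t'.+1 p.1 p.2
  end.
End Steps.

Arguments ong_step [n K U Y] f h u T beta lnZ E yobs eta gamma t thp Jp.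
Arguments ong_run [n K U Y] f h u T beta lnZ E yobs eta gamma th0 J0 t.

(* Since every f(.,u_t) is a bijection of R^n, Phi_t is a bijection
   from trajectories onto R^n, so Phi_t o Phi_t^{-1} = id, and the transition map
   Phi_{t-1} o Phi_t^{-1} is the inverse diffeomorphism of f(.,u_t).  By the chain
   rule its Jacobian at Phi_t(s) = f(s_{t-1},u_t) is the inverse of the Jacobian F
   of f(.,u_t) at s_{t-1}; and the model ln p_t read in chart Phi_t is just
   s |-> ln p_obs(y | h(s,u_t)).  Substituting these identities shows that one
   step of each algorithm agrees, and induction on t concludes. *)
From Stdlib Require Import Reals Lra Psatz ClassicalEpsilon FunctionalExtensionality.
From mathcomp Require Import ssreflect ssrfun ssrbool eqtype ssrnat seq choice fintype.
Set Implicit Arguments.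
Unset Strict Implicit.
Unset Printing Implicit Defensive.
Local Open Scope R_scope.

Definition sumL {A : Type} (l : seq A) (F : A -> R) : R := foldr Rplus 0 (map F l).

Section ListSums.
Context {A : Type}.
Implicit Types (l : seq A) (F G : A -> R).

Lemma sumL_cons a l F : sumL (a :: l) F = F a + sumL l F.
Proof. by []. Qed.

Lemma sumL_ext l F G : (forall i, F i = G i) -> sumL l F = sumL l G.
Proof. by move=> H; rewrite (functional_extensionality _ _ H). Qed.

Lemma sumL_0 l : sumL l (fun _ => 0) = 0.
Proof. elim: l => [|a l IH] /=; [done | rewrite sumL_cons IH; lra]. Qed.

Lemma sumL_add l F G : sumL l (fun i => F i + G i) = sumL l F + sumL l G.
Proof. elim: l => [|a l IH] /=; [rewrite /sumL /=; lra | rewrite !sumL_cons IH; lra]. Qed.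

Lemma sumL_sub l F G : sumL l (fun i => F i - G i) = sumL l F - sumL l G.
Proof. elim: l => [|a l IH] /=; [rewrite /sumL /=; lra | rewrite !sumL_cons IH; lra]. Qed.

Lemma sumL_scale l c F : sumL l (fun i => c * F i) = c * sumL l F.
Proof. elim: l => [|a l IH] /=; [rewrite /sumL /=; lra | rewrite !sumL_cons IH; lra]. Qed.

Lemma sumL_scaler l c F : sumL l (fun i => F i * c) = sumL l F * c.
Proof. elim: l => [|a l IH] /=; [rewrite /sumL /=; lra | rewrite !sumL_cons IH; lra]. Qed.

Lemma sumL_le l F G : (forall i, F i <= G i) -> sumL l F <= sumL l G.
Proof.
move=> H; elim: l => [|a l IH] /=; [rewrite /sumL /=; lra | rewrite !sumL_cons].
by have := H a; lra.
Qed.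

Lemma sumL_ge0 l F : (forall i, 0 <= F i) -> 0 <= sumL l F.
Proof. by move=> H; rewrite -(sumL_0 l); apply: sumL_le. Qed.

Lemma sumL_abs l F : Rabs (sumL l F) <= sumL l (fun i => Rabs (F i)).
Proof.
elim: l => [|a l IH]; first by rewrite /sumL /= Rabs_R0; lra.
rewrite !sumL_cons; have := Rabs_triang (F a) (sumL l F); lra.
Qed.
End ListSums.

Lemma sumL_swap {A B : Type} (l : seq A) (l' : seq B) (F : A -> B -> R) :
  sumL l (fun i => sumL l' (F i)) = sumL l' (fun j => sumL l (fun i => F i j)).
Proof.
elim: l => [|a l IH] /=.
  by rewrite /sumL /= -/(sumL l' (fun _ => 0)) sumL_0.
by rewrite sumL_cons IH -sumL_add.
Qed.

Section ListSumsEq.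
Context {A : eqType}.
Implicit Types (l : seq A) (F : A -> R).

Lemma sumL_delta_notin l i F :
  i \notin l -> sumL l (fun j => if i == j then F j else 0) = 0.
Proof.
elim: l => [|x l IH] //=; rewrite inE negb_or sumL_cons => /andP [neq_ix i_notin].
by rewrite IH // (negbTE neq_ix); lra.
Qed.

Lemma sumL_delta l i F :
  uniq l -> i \in l -> sumL l (fun j => if i == j then F j else 0) = F i.
Proof.
elim: l => [|x l IH] //= /andP [x_notin uniq_l]; rewrite inE sumL_cons.
case: (eqVneq i x) x_notin => [<- i_notin _ | neq_ix _ /= i_in].
  by rewrite sumL_delta_notin //; lra.
by rewrite IH //; lra.
Qed.

Lemma sumL_term_le l F i : (forall j, 0 <= F j) -> i \in l -> F i <= sumL l F.
Proof.
move=> F_ge0; elim: l => [|x l IH] //=; rewrite inE sumL_cons => /orP [/eqP -> | i_in].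
  by have := sumL_ge0 l F_ge0; lra.
by have := IH i_in; have := F_ge0 x; lra.
Qed.
End ListSumsEq.

Section VectorsMatrices.
Implicit Types (m n p q : nat).

Lemma sumI_sumL n (F : 'I_n -> R) : sumI F = sumL (enum 'I_n) F.
Proof. by []. Qed.

Lemma sumI_delta n (i : 'I_n) (F : 'I_n -> R) :
  sumI (fun j => if i == j then F j else 0) = F i.
Proof. by rewrite sumI_sumL sumL_delta ?enum_uniq ?mem_enum. Qed.

Lemma vnorm_ge0 n (x : vec n) : 0 <= vnorm x.
Proof. apply: sumL_ge0 => i; exact: Rabs_pos. Qed.

Lemma vnorm_comp_le n (x : vec n) i : Rabs (x i) <= vnorm x.
Proof.
rewrite /vnorm sumI_sumL.
by apply: (@sumL_term_le _ _ (fun i => Rabs (x i))); [move=> j; exact: Rabs_pos | rewrite mem_enum].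
Qed.

Lemma vnorm_zerov n : vnorm (@zerov n) = 0.
Proof. by rewrite /vnorm sumI_sumL -(sumL_0 (enum 'I_n)) /zerov Rabs_R0. Qed.

Lemma vnorm_add_le n (x y : vec n) : vnorm (vadd x y) <= vnorm x + vnorm y.
Proof. rewrite /vnorm !sumI_sumL -sumL_add; apply: sumL_le => i; exact: Rabs_triang. Qed.

Lemma vnorm_sub_le n (x y : vec n) : vnorm (vsub x y) <= vnorm x + vnorm y.
Proof.
rewrite /vnorm !sumI_sumL -sumL_add; apply: sumL_le => i.
by rewrite /vsub -(Rabs_Ropp (y i)); exact: Rabs_triang.
Qed.

Definition basis n (j : 'I_n) (r : R) : vec n := fun k => if j == k then r else 0.

Lemma vnorm_basis n (j : 'I_n) r : vnorm (basis j r) = Rabs r.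
Proof.
rewrite /vnorm -(sumI_delta j (fun _ => Rabs r)); apply: sumL_ext => k.
by rewrite /basis; case: (j == k); rewrite ?Rabs_R0.
Qed.

Lemma mulmv_basis m n (D : mat m n) j r i : mulmv D (basis j r) i = D i j * r.
Proof.
rewrite /mulmv -(sumI_delta j (fun k => D i k * r)); apply: sumL_ext => k.
by rewrite /basis; case: (j == k); ring.
Qed.

Definition mnorm m n (A : mat m n) : R := sumI (fun i => sumI (fun j => Rabs (A i j))).

Lemma mnorm_ge0 m n (A : mat m n) : 0 <= mnorm A.
Proof. apply: sumL_ge0 => i; apply: sumL_ge0 => j; exact: Rabs_pos. Qed.

Lemma mulmv_bound m n (A : mat m n) x : vnorm (mulmv A x) <= mnorm A * vnorm x.
Proof.
rewrite /vnorm /mnorm /mulmv !sumI_sumL -sumL_scaler; apply: sumL_le => i.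
apply: Rle_trans; first exact: sumL_abs.
rewrite -sumL_scaler; apply: sumL_le => j; rewrite Rabs_mult.
apply: Rmult_le_compat_l; [exact: Rabs_pos | exact: vnorm_comp_le].
Qed.

Lemma mulmv_sub m n (A : mat m n) x y : mulmv A (vsub x y) = vsub (mulmv A x) (mulmv A y).
Proof.
apply: functional_extensionality => i; rewrite /mulmv /vsub !sumI_sumL -sumL_sub.
by apply: sumL_ext => j; ring.
Qed.

Lemma mulmv_msub m n (A B : mat m n) x :
  mulmv (fun i j => A i j - B i j) x = vsub (mulmv A x) (mulmv B x).
Proof.
apply: functional_extensionality => i; rewrite /mulmv /vsub !sumI_sumL -sumL_sub.
by apply: sumL_ext => j; ring.
Qed.

Lemma mulmv_mulmm m n p (B : mat m n) (A : mat n p) x :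
  mulmv (mulmm B A) x = mulmv B (mulmv A x).
Proof.
apply: functional_extensionality => i; rewrite /mulmv /mulmm !sumI_sumL.
under sumL_ext => j do rewrite -sumL_scaler.
rewrite sumL_swap; apply: sumL_ext => k; rewrite -sumL_scale.
by apply: sumL_ext => j; ring.
Qed.

Lemma mulmmA m n p q (A : mat m n) (B : mat n p) (C : mat p q) :
  mulmm (mulmm A B) C = mulmm A (mulmm B C).
Proof.
apply: functional_extensionality => i; apply: functional_extensionality => l.
rewrite /mulmm !sumI_sumL.
under sumL_ext => j do rewrite -sumL_scaler.
rewrite sumL_swap; apply: sumL_ext => k; rewrite -sumL_scale.
by apply: sumL_ext => j; ring.
Qed.

Lemma mulmm1 m n (A : mat m n) : mulmm A (@idm n) = A.
Proof.
apply: functional_extensionality => i; apply: functional_extensionality => k.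
rewrite /mulmm /idm -(sumI_delta k (A i)); apply: sumL_ext => j.
by rewrite (eq_sym k); case: (j == k); ring.
Qed.

Lemma mul1mm m n (A : mat m n) : mulmm (@idm m) A = A.
Proof.
apply: functional_extensionality => i; apply: functional_extensionality => k.
rewrite /mulmm /idm -(sumI_delta i (fun j => A j k)); apply: sumL_ext => j.
by case: (i == j); ring.
Qed.

Lemma mulmv1 n (x : vec n) : mulmv (@idm n) x = x.
Proof.
apply: functional_extensionality => i.
rewrite /mulmv /idm -(sumI_delta i x); apply: sumL_ext => j.
by case: (i == j); ring.
Qed.

Lemma minv_unique n (A B : mat n n) : is_minv A B -> minv A = B.
Proof.
move=> invAB; have [AM MA] : is_minv A (minv A).
  by apply: (epsilon_spec (inhabits (@zerom n n)) (is_minv A)); exists B.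
case: invAB => AB BA.
by rewrite -(mulmm1 (minv A)) -AB -mulmmA MA mul1mm.
Qed.
End VectorsMatrices.

Lemma jacobian_spec m n (g : vec n -> vec m) x :
  differentiable g -> has_jacobian g x (jacobian g x).
Proof. by move=> dg; apply: (epsilon_spec _ (has_jacobian g x)); exact: dg. Qed.

Lemma jacobian_id n (x : vec n) : has_jacobian (fun y => y) x (@idm n).
Proof.
move=> eps eps_gt0; exists 1; split; first lra.
move=> hh _; rewrite mulmv1.
have -> : vsub (vsub (vadd x hh) x) hh = @zerov n.
  by apply: functional_extensionality => i; rewrite /vsub /vadd /zerov; ring.
by rewrite vnorm_zerov; have := vnorm_ge0 hh; nra.
Qed.

Lemma negligible_matrix_zero m n (M : mat m n) :
  (forall eps, 0 < eps -> exists delta, 0 < delta /\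
     forall hh : vec n, vnorm hh < delta -> vnorm (mulmv M hh) <= eps * vnorm hh) ->
  forall i j, M i j = 0.
Proof.
move=> small i j.
suff bound : forall eps, 0 < eps -> Rabs (M i j) <= eps.
  case: (Req_dec (M i j) 0) => // nz.
  by have := Rabs_pos_lt _ nz; have := bound (Rabs (M i j) / 2); lra.
move=> eps eps_gt0; have [delta [delta_gt0 Mdelta]] := small eps eps_gt0.
have r_gt0 : 0 < delta / 2 by lra.
have := Mdelta (basis j (delta / 2)).
rewrite vnorm_basis Rabs_right; last lra.
move=> /(_ ltac:(lra)) Mr.
have := vnorm_comp_le (mulmv M (basis j (delta / 2))) i.
rewrite mulmv_basis Rabs_mult (Rabs_right (delta / 2)); last lra.
by move=> Mi; apply: (Rmult_le_reg_r (delta / 2)); lra.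
Qed.

Lemma jacobian_unique m n (g : vec n -> vec m) x D1 D2 :
  has_jacobian g x D1 -> has_jacobian g x D2 -> D1 = D2.
Proof.
move=> J1 J2.
suff zero : forall i j, D1 i j - D2 i j = 0.
  apply: functional_extensionality => i; apply: functional_extensionality => j.
  exact: Rminus_diag_uniq.
apply: (@negligible_matrix_zero _ _ (fun i j => D1 i j - D2 i j)) => eps eps_gt0.
have [d1 [d1_gt0 R1]] := J1 (eps / 2) ltac:(lra).
have [d2 [d2_gt0 R2]] := J2 (eps / 2) ltac:(lra).
exists (Rmin d1 d2); split; first exact: Rmin_pos.
move=> hh small.
have small1 : vnorm hh < d1 by have := Rmin_l d1 d2; lra.
have small2 : vnorm hh < d2 by have := Rmin_r d1 d2; lra.
have := R1 hh small1; have := R2 hh small2.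
set incr := vsub (g (vadd x hh)) (g x) => err2 err1.
have -> : mulmv (fun i j => D1 i j - D2 i j) hh
          = vsub (vsub incr (mulmv D2 hh)) (vsub incr (mulmv D1 hh)).
  by rewrite mulmv_msub; apply: functional_extensionality => i; rewrite /vsub; ring.
apply: Rle_trans; first exact: vnorm_sub_le.
lra.
Qed.

(* Tolerances for the chain rule: the error of G o F at h is bounded by
   |B| e1 |h| + e2 (|A| + 1) |h| when F and G have tolerances e1 <= 1 and e2. *)
Lemma chain_rule_tolerances a b eps : 0 <= a -> 0 <= b -> 0 < eps ->
  exists e1 e2, (0 < e1 <= 1) /\ 0 < e2 /\ b * e1 + e2 * (a + 1) <= eps.
Proof.
move=> a_ge0 b_ge0 eps_gt0.
set c := eps / (2 * (b + 1)).
have c_gt0 : 0 < c by apply: Rdiv_lt_0_compat; lra.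
have bc : (b + 1) * c = eps / 2 by rewrite /c; field; lra.
exists (Rmin 1 c), (eps / (2 * (a + 1))); split; [split|split].
- by apply: Rmin_pos; lra.
- exact: Rmin_l.
- by apply: Rdiv_lt_0_compat; lra.
- have e1_gt0 : 0 < Rmin 1 c by apply: Rmin_pos; lra.
  have e1c : (b + 1) * Rmin 1 c <= (b + 1) * c.
    by apply: Rmult_le_compat_l; [lra | exact: Rmin_r].
  have -> : eps / (2 * (a + 1)) * (a + 1) = eps / 2 by field; lra.
  lra.
Qed.

Lemma jacobian_comp m n p (F : vec n -> vec m) (G : vec m -> vec p) x A B :
  has_jacobian F x A -> has_jacobian G (F x) B ->
  has_jacobian (fun y => G (F y)) x (mulmm B A).
Proof.
move=> JF JG eps eps_gt0.
have nA := mnorm_ge0 A; have nB := mnorm_ge0 B.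
have [e1 [e2 [[e1_gt0 e1_le1] [e2_gt0 tol]]]] := chain_rule_tolerances nA nB eps_gt0.
have [d1 [d1_gt0 RF]] := JF e1 e1_gt0.
have [d2 [d2_gt0 RG]] := JG e2 e2_gt0.
have d2'_gt0 : 0 < d2 / (mnorm A + 1) by apply: Rdiv_lt_0_compat; lra.
exists (Rmin d1 (d2 / (mnorm A + 1))); split; first exact: Rmin_pos.
move=> hh small; have nh := vnorm_ge0 hh.
have small1 : vnorm hh < d1 by have := Rmin_l d1 (d2 / (mnorm A + 1)); lra.
have small2 : (mnorm A + 1) * vnorm hh < d2.
  have -> : d2 = (mnorm A + 1) * (d2 / (mnorm A + 1)) by field; lra.
  apply: Rmult_lt_compat_l; first lra.
  by have := Rmin_r d1 (d2 / (mnorm A + 1)); lra.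
set k := vsub (F (vadd x hh)) (F x).
set r1 := vsub k (mulmv A hh).
have r1_small : vnorm r1 <= e1 * vnorm hh := RF hh small1.
have k_bound : vnorm k <= (mnorm A + 1) * vnorm hh.
  have -> : k = vadd r1 (mulmv A hh).
    by apply: functional_extensionality => i; rewrite /r1 /vadd /vsub; ring.
  by have := vnorm_add_le r1 (mulmv A hh); have := mulmv_bound A hh; nra.
have Fk : vadd (F x) k = F (vadd x hh).
  by apply: functional_extensionality => i; rewrite /k /vadd /vsub; ring.
have := RG k ltac:(lra); rewrite Fk.
set r2 := vsub (vsub (G (F (vadd x hh))) (G (F x))) (mulmv B k) => r2_small.
have -> : vsub (vsub (G (F (vadd x hh))) (G (F x))) (mulmv (mulmm B A) hh)
          = vadd r2 (mulmv B r1).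
  rewrite mulmv_mulmm /r1 mulmv_sub /r2.
  by apply: functional_extensionality => i; rewrite /vadd /vsub; ring.
apply: Rle_trans; first exact: vnorm_add_le.
have := mulmv_bound B r1.
have : vnorm r2 <= e2 * ((mnorm A + 1) * vnorm hh).
  by apply: (Rle_trans _ _ _ r2_small); apply: Rmult_le_compat_l; lra.
have : mnorm B * vnorm r1 <= mnorm B * (e1 * vnorm hh) by apply: Rmult_le_compat_l.
have : (mnorm B * e1 + e2 * (mnorm A + 1)) * vnorm hh <= eps * vnorm hh.
  exact: Rmult_le_compat_r.
lra.
Qed.

Lemma jacobian_inverse n (F G : vec n -> vec n) x :
  (forall y, G (F y) = y) -> (forall y, F (G y) = y) ->
  differentiable F -> differentiable G ->
  jacobian G (F x) = minv (jacobian F x).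
Proof.
move=> GF FG dF dG.
have GF_id : (fun y => G (F y)) = (fun y => y) by apply: functional_extensionality.
have FG_id : (fun y => F (G y)) = (fun y => y) by apply: functional_extensionality.
have JF := jacobian_spec x dF; have JG := jacobian_spec (F x) dG.
have JF' : has_jacobian F (G (F x)) (jacobian F x) by rewrite GF.
symmetry; apply: minv_unique; split.
- have := jacobian_comp JG JF'; rewrite FG_id => J_FG.
  exact: jacobian_unique J_FG (jacobian_id (F x)).
- have := jacobian_comp JF JG; rewrite GF_id => J_GF.
  exact: jacobian_unique J_GF (jacobian_id x).
Qed.

Section Charts.
Variables (n : nat) (U : Type) (f : vec n -> U -> vec n) (u : nat -> U).

Lemma chart_succ t (s : traj f u) : chart t.+1 s = f (chart t s) (u t.+1).
Proof. exact: (proj2_sig s t). Qed.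

Hypothesis f_onto : forall t x, exists y, f y (u t) = x.

Lemma chart_onto t x : exists s : traj f u, chart t s = x.
Proof.
elim: t x => [|t IH] x; first by exists (exist _ (fwd f u x) (fwd_traj f u x)).
have [y <-] := f_onto t.+1 x; have [s <-] := IH y.
by exists s; rewrite chart_succ.
Qed.

Lemma chart_chart_inv t x : chart t (chart_inv f u t x) = x.
Proof. exact: (epsilon_spec (traj_inh f u) (fun s => chart t s = x) (chart_onto t x)). Qed.

Lemma chart_transition t G :
  (forall y, G (f y (u t.+1)) = y) -> (fun x => chart t (chart_inv f u t.+1 x)) = G.
Proof.
move=> Gf; apply: functional_extensionality => x.
by rewrite -{2}(chart_chart_inv t.+1 x) chart_succ Gf.
Qed.
End Charts.

Lemma diffeo_onto n (F : vec n -> vec n) : is_diffeo F -> forall x, exists y, F y = x.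
Proof. by case=> G [_ [FG _]] x; exists (G x). Qed.

Section OneStep.
Variables (n K : nat) (U Y : Type) (f : vec n -> U -> vec n) (h : vec n -> U -> vec K)
  (u : nat -> U) (T : Y -> vec K) (beta : vec K -> vec K) (lnZ : vec K -> R)
  (E : vec K -> (Y -> R) -> R) (yobs : nat -> Y) (eta gamma : nat -> R).
Hypothesis f_diffeo : forall t, is_diffeo (fun s => f s (u t)).

Let f_onto t : forall x, exists y, f y (u t) = x := diffeo_onto (f_diffeo t).

Lemma ln_model_in_chart t y :
  (fun x => ln_model h T beta lnZ t y (chart_inv f u t x))
  = (fun s => ln_pobs T beta lnZ y (h s (u t))).
Proof. by apply: functional_extensionality => x; rewrite /ln_model chart_chart_inv. Qed.

Lemma ong_step_in_chart t (thp : traj f u) (Jp : mat n n) :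
  chart t.+1 (ong_step f h u T beta lnZ E yobs eta gamma t.+1 thp Jp).1
    = (ekf_step f h u T beta lnZ E yobs eta gamma t.+1 (chart t thp) Jp).1
  /\ (ong_step f h u T beta lnZ E yobs eta gamma t.+1 thp Jp).2
    = (ekf_step f h u T beta lnZ E yobs eta gamma t.+1 (chart t thp) Jp).2.
Proof.
have [G [Gf [fG [df dG]]]] := f_diffeo t.+1.
have jacG := @jacobian_inverse _ (fun s => f s (u t.+1)) G (chart t thp) Gf fG df dG.
rewrite /ong_step /ekf_step /= (chart_transition f_onto Gf) ln_model_in_chart.
under [X in Emat _ _ X]functional_extensionality => y do rewrite ln_model_in_chart.
by rewrite chart_chart_inv // chart_succ jacG.
Qed.
End OneStep.

(* The identity holds verbatim, without the hypotheses on h and on the mean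
   parametrisation of the exponential family. *)
Theorem corollary9 (n K : nat) (U Y : Type)
  (f : vec n -> U -> vec n) (h : vec n -> U -> vec K) (u : nat -> U)
  (T : Y -> vec K) (beta : vec K -> vec K) (lnZ : vec K -> R)
  (E : vec K -> (Y -> R) -> R) (yobs : nat -> Y) (eta gamma : nat -> R)
  (hf : forall t, is_diffeo (fun s => f s (u t)))
  (hh : forall t, differentiable (fun s => h s (u t)))
  (hmean : forall (yhat : vec K) (k : 'I_K), E yhat (fun y => T y k) = yhat k)
  (th0 : traj f u) (J0 : mat n n) :
  forall t : nat,
    chart t (ong_run f h u T beta lnZ E yobs eta gamma th0 J0 t).1
      = (ekf_run f h u T beta lnZ E yobs eta gamma (chart 0 th0) J0 t).1
    /\ (ong_run f h u T beta lnZ E yobs eta gamma th0 J0 t).2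
      = (ekf_run f h u T beta lnZ E yobs eta gamma (chart 0 th0) J0 t).2.
Proof.
elim=> [|t [IH1 IH2]]; first by [].
rewrite /= -IH1 -IH2.
exact: ong_step_in_chart.
Qed.
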